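(* Let $k$ be a field of prime characteristic $p$, and let $V_1,V_2,\ldots$ be a sequence of $T$-spaces of $k_0\langle X\rangle$ such that (a) $(V_iV_j)^S=V_{i+j}$ for all $i,j\ge1$, and (b) $V_{2m+1}\subseteq V_{m+1}+V_1$ for all $m\ge1$. Let $I: i_1<i_2<i_3<\cdots$ be any increasing sequence of positive integers. Then there exists a set $J$ of positive integers (indices of the sequence) with $|J|\le i_2-i_1+1$ such that $1,2\in J$ and $\sum_{j\ge1} V_{i_j}=\sum_{j\in J}V_{i_j}$.
   Context: $X=\{x_1,x_2,\ldots\}$ is a countably infinite set and $k_0\langle X\rangle$ denotes the free associative (non-unital) $k$-algebra on $X$. A $T$-space is a $k$-subspace of $k_0\langle X\rangle$ invariant under every algebra endomorphism of $k_0\langle X\rangle$. For a subset $A$, $(A)^S$ denotes the $T$-space generated by $A$. For subsets $A,B$, $AB$ denotes $\{ab: a\in A, b\in B\}$. Sums of $T$-spaces are sums of subspaces. *)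

(* The free non-unital associative algebra k_0<X> on
   X = {x_0, x_1, ...} (countably many variables, indexed by nat) is modelled
   as the set of finitely supported functions from words (seq nat) to k that
   vanish on the empty word; equality is Leibniz equality of functions. *)
From mathcomp Require Import all_boot all_algebra.
Set Implicit Arguments. Unset Strict Implicit. Unset Printing Implicit Defensive.
Import GRing.Theory.
Local Open Scope ring_scope.

Definition word := seq nat.
Definition ncp (k : fieldType) := word -> k.

Section NC.
Variable k : fieldType.

Definition is_ncpoly (f : ncp k) : Prop :=
  f [::] = 0 /\ exists s : seq word, forall w, f w != 0 -> w \in s.

Definition nczero : ncp k := fun _ => 0.
Definition ncadd (f g : ncp k) : ncp k := fun w => f w + g w.
Definition ncscale (a : k) (f : ncp k) : ncp k := fun w => a * f w.
(* concatenation product of words, extended bilinearly *)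
Definition ncmul (f g : ncp k) : ncp k :=
  fun w => \sum_(i < (size w).+1) f (take i w) * g (drop i w).

Definition is_subspace (V : ncp k -> Prop) : Prop :=
  [/\ forall f, V f -> is_ncpoly f,
      V nczero,
      forall f g, V f -> V g -> V (ncadd f g)
    & forall a f, V f -> V (ncscale a f)].

(* algebra endomorphism of k_0<X> (only its values on k_0<X> matter) *)
Definition is_alg_endo (phi : ncp k -> ncp k) : Prop :=
  (forall f, is_ncpoly f -> is_ncpoly (phi f)) /\
  (forall f g, is_ncpoly f -> is_ncpoly g ->
     phi (ncadd f g) = ncadd (phi f) (phi g) /\
     phi (ncmul f g) = ncmul (phi f) (phi g)) /\
  (forall a f, is_ncpoly f -> phi (ncscale a f) = ncscale a (phi f)).

Definition is_Tspace (V : ncp k -> Prop) : Prop :=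
  is_subspace V /\ forall phi, is_alg_endo phi -> forall f, V f -> V (phi f).

(* (A)^S : the T-space generated by A (intersection of all T-spaces containing A) *)
Definition Tgen (A : ncp k -> Prop) : ncp k -> Prop :=
  fun f => forall V, is_Tspace V -> (forall g, A g -> V g) -> V f.

Definition prodset (A B : ncp k -> Prop) : ncp k -> Prop :=
  fun f => exists a b, [/\ A a, B b & f = ncmul a b].

Definition addsp (A B : ncp k -> Prop) : ncp k -> Prop :=
  fun f => exists a b, [/\ A a, B b & f = ncadd a b].

Definition sumsp (F : nat -> ncp k -> Prop) (P : nat -> Prop) : ncp k -> Prop :=
  fun f => exists (s : seq nat) (g : nat -> ncp k),
    (forall j, j \in s -> P j /\ F j (g j)) /\
    f = (fun w => \sum_(j <- s) g j w).

Definition seteq (A B : ncp k -> Prop) : Prop := forall f, A f <-> B f.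

End NC.

From mathcomp Require Import all_boot all_algebra.
From mathcomp Require Import zify.
From Stdlib Require Import Classical FunctionalExtensionality.
Set Implicit Arguments. Unset Strict Implicit. Unset Printing Implicit Defensive.
Import GRing.Theory.

(* The identities (a) and (b) give V (x + 2e) <= V (x + e) + V x for all x, e > 0:
   for x = 1 this is (b), and for x > 1 the space V (x + 2e) is generated by
   products of V (2e + 1) with V (x - 1).  Hence, for any space W, the set of n
   with V n <= W is closed under extending an arithmetic progression from two
   consecutive terms, so it contains the whole progression through any two of
   its elements; a Euclidean descent on the gaps shows that it also contains
   u + h + t f as soon as it contains u + h and every u + t f.  With
   d = I 2 - I 1, take J to be {2} together with the least index in each class
   of I modulo d: the progression I 1 + t d is covered, hence so is I b + t d
   for every b in J, and this progression meets every I j in the class of I b. *)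

Section NcAlgebra.
Variable k : fieldType.
Implicit Types (f g a b : ncp k) (A B : ncp k -> Prop).

Lemma ncpoly_add f g : is_ncpoly f -> is_ncpoly g -> is_ncpoly (ncadd f g).
Proof.
move=> [f0 [s Hs]] [g0 [t Ht]]; split; first by rewrite /ncadd f0 g0 addr0.
exists (s ++ t) => w; rewrite /ncadd mem_cat.
by have [->|/Hs ->//] := eqVneq (f w) 0%R; rewrite add0r => /Ht ->; rewrite orbT.
Qed.

Lemma ncmulDl a1 a2 b : ncmul (ncadd a1 a2) b = ncadd (ncmul a1 b) (ncmul a2 b).
Proof.
apply: functional_extensionality => w; rewrite /ncmul /ncadd -big_split /=.
by apply: eq_bigr => i _; rewrite mulrDl.
Qed.

Lemma ncadd0l f : ncadd (nczero k) f = f.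
Proof. by apply: functional_extensionality => w; rewrite /ncadd /nczero add0r. Qed.

Lemma ncadd0r f : ncadd f (nczero k) = f.
Proof. by apply: functional_extensionality => w; rewrite /ncadd /nczero addr0. Qed.

Lemma ncaddA f g h : ncadd f (ncadd g h) = ncadd (ncadd f g) h.
Proof. by apply: functional_extensionality => w; rewrite /ncadd addrA. Qed.

Lemma ncsum_nil (g : nat -> ncp k) : (fun w => \sum_(j <- [::]) g j w)%R = nczero k.
Proof. by apply: functional_extensionality => w; rewrite big_nil. Qed.

Lemma ncsum_cons j s (g : nat -> ncp k) :
  (fun w => \sum_(i <- j :: s) g i w)%R = ncadd (g j) (fun w => \sum_(i <- s) g i w)%R.
Proof. by apply: functional_extensionality => w; rewrite big_cons. Qed.

Lemma addsp_Tspace A B : is_Tspace A -> is_Tspace B -> is_Tspace (addsp A B).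
Proof.
move=> [[A_poly A0 AD AZ] A_endo] [[B_poly B0 BD BZ] B_endo]; split; first split.
- by move=> _ [a [b [Aa Bb ->]]]; apply: ncpoly_add; [apply: A_poly|apply: B_poly].
- by exists (nczero k), (nczero k); rewrite ncadd0r.
- move=> _ _ [a [b [Aa Bb ->]]] [a' [b' [Aa' Bb' ->]]].
  exists (ncadd a a'), (ncadd b b'); split; [exact: AD|exact: BD|].
  by apply: functional_extensionality => w; rewrite /ncadd addrACA.
- move=> c _ [a [b [Aa Bb ->]]]; exists (ncscale c a), (ncscale c b).
  split; [exact: AZ|exact: BZ|].
  by apply: functional_extensionality => w; rewrite /ncadd /ncscale mulrDr.
- move=> phi endo_phi _ [a [b [Aa Bb ->]]].
  have [_ [/(_ a b (A_poly a Aa) (B_poly b Bb)) [-> _] _]] := endo_phi.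
  by exists (phi a), (phi b); split; [exact: A_endo|exact: B_endo|].
Qed.

Lemma Tgen_mul A B a b : A a -> B b -> Tgen (prodset A B) (ncmul a b).
Proof. by move=> Aa Bb W _; apply; exists a, b. Qed.

End NcAlgebra.

Section SubspaceSums.
Variables (k : fieldType) (F : nat -> ncp k -> Prop) (P : nat -> Prop).

Lemma sumsp0 : sumsp F P (nczero k).
Proof.
by exists [::], (fun _ => nczero k); rewrite ncsum_nil.
Qed.

Lemma sumsp1 j h : P j -> F j h -> sumsp F P h.
Proof.
move=> Pj Fh; exists [:: j], (fun _ => h); split; first by move=> i; rewrite inE => /eqP ->.
by apply: functional_extensionality => w; rewrite big_seq1.
Qed.

Lemma sumsp_sub (Q : nat -> Prop) f :
  (forall j, P j -> Q j) -> sumsp F P f -> sumsp F Q f.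
Proof.
move=> PQ [s [g [Hs ->]]]; exists s, g; split => // j /Hs[Pj Fj].
by split; first exact: PQ.
Qed.

Lemma sumsp_min (W : ncp k -> Prop) f :
  W (nczero k) -> (forall a b, W a -> W b -> W (ncadd a b)) ->
  (forall j h, P j -> F j h -> W h) -> sumsp F P f -> W f.
Proof.
move=> W0 WD FW [s [g [Hs ->]]]; elim: s Hs => [|j s IHs] Hs; first by rewrite ncsum_nil.
rewrite ncsum_cons.
have [Pj Fj] := Hs j (mem_head _ _).
by apply: WD; [exact: FW Fj | apply: IHs => i si; apply: Hs; rewrite inE si orbT].
Qed.

Hypothesis F_add : forall j, P j -> forall a b, F j a -> F j b -> F j (ncadd a b).

(* A summand can only be merged into an existing term if that index occurs once. *)
Let uniq_sumsp (f : ncp k) := exists s g, [/\ uniq s,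
  forall j, j \in s -> P j /\ F j (g j) & f = (fun w => \sum_(j <- s) g j w)%R].

Let uniq_sumsp_addl j h f : P j -> F j h -> uniq_sumsp f -> uniq_sumsp (ncadd h f).
Proof.
move=> Pj Fh [s [g [us Hs ->]]]; have [js|jNs] := boolP (j \in s).
- exists s, (fun i => if i == j then ncadd h (g j) else g i); split => //.
    move=> i si; case: eqP => [->|_]; last exact: Hs.
    by split => //; apply: F_add => //; apply: (Hs j js).2.
  apply: functional_extensionality => w.
  rewrite /ncadd (bigD1_seq j js us) /= (bigD1_seq j js us) /= eqxx -addrA.
  by congr (_ + (_ + _))%R; apply: eq_bigr => i /negbTE ->.
- exists (j :: s), (fun i => if i == j then h else g i); split; first by rewrite /= jNs.
    by move=> i; rewrite inE; case: eqP => [-> _ //| _ /Hs].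
  apply: functional_extensionality => w; rewrite /ncadd big_cons eqxx.
  congr (_ + _)%R; apply: eq_big_seq => i si.
  by case: eqP => // eij; move: jNs; rewrite -eij si.
Qed.

Let uniq_sumsp_add f g : sumsp F P f -> uniq_sumsp g -> uniq_sumsp (ncadd f g).
Proof.
move=> [s [h [Hs ->]]] Hg; elim: s Hs => [|j s IHs] Hs; first by rewrite ncsum_nil ncadd0l.
have [Pj Fj] := Hs j (mem_head _ _).
rewrite ncsum_cons -ncaddA; apply: uniq_sumsp_addl Pj Fj _.
by apply: IHs => i si; apply: Hs; rewrite inE si orbT.
Qed.

Lemma sumsp_add f g : sumsp F P f -> sumsp F P g -> sumsp F P (ncadd f g).
Proof.
have uniq_sumspW h : uniq_sumsp h -> sumsp F P h by move=> [s [g' [_ ? ?]]]; exists s, g'.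
have uniq_sumsp0 : uniq_sumsp (nczero k) by exists [::], (fun _ => nczero k); rewrite ncsum_nil.
move=> Hf Hg; apply/uniq_sumspW/uniq_sumsp_add => //.
by rewrite -[g]ncadd0r; apply: uniq_sumsp_add.
Qed.
End SubspaceSums.

Section TspaceSequence.
Variables (k : fieldType) (V : nat -> ncp k -> Prop).
Hypothesis V_Tspace : forall i, 0 < i -> is_Tspace (V i).
Hypothesis V_mul : forall i j, 0 < i -> 0 < j ->
  seteq (Tgen (prodset (V i) (V j))) (V (i + j)).
Hypothesis V_odd : forall m, 0 < m -> forall f,
  V (2 * m + 1) f -> addsp (V (m + 1)) (V 1) f.

Lemma V_mul_addsp i i1 i2 j : 0 < i -> 0 < i1 -> 0 < i2 -> 0 < j ->
  (forall f, V i f -> addsp (V i1) (V i2) f) ->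
  forall f, V (i + j) f -> addsp (V (i1 + j)) (V (i2 + j)) f.
Proof.
move=> i0 i10 i20 j0 Vi_split f /(V_mul i0 j0 f).2; apply.
  by apply: addsp_Tspace; apply: V_Tspace; rewrite addn_gt0 ?i10 ?i20.
move=> _ [a [b [/Vi_split [a1 [a2 [Va1 Va2 ->]]] Vb ->]]]; rewrite ncmulDl.
exists (ncmul a1 b), (ncmul a2 b); split => //.
- by apply: (V_mul i10 j0 _).1; apply: Tgen_mul.
- by apply: (V_mul i20 j0 _).1; apply: Tgen_mul.
Qed.

Lemma V_split x e : 0 < x -> 0 < e ->
  forall f, V (x + 2 * e) f -> addsp (V (x + e)) (V x) f.
Proof.
case: x => [//|[|l]] _ e0 f.
  by rewrite add1n -addn1 => /(V_odd e0); rewrite addn1 add1n.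
have -> : l.+2 + 2 * e = 2 * e + 1 + l.+1 by lia.
have -> : l.+2 + e = e + 1 + l.+1 by lia.
by move=> Vf; apply: V_mul_addsp (V_odd e0) _ Vf; rewrite ?addn_gt0 ?e0.
Qed.

End TspaceSequence.

Definition progression_closed (P : nat -> Prop) :=
  forall x e, 0 < x -> 0 < e -> P x -> P (x + e) -> P (x + 2 * e).

Section ProgressionClosed.
Variable P : nat -> Prop.
Hypothesis P_closed : progression_closed P.

Lemma progression_closed_all x e : 0 < x -> 0 < e -> P x -> P (x + e) ->
  forall t, P (x + t * e).
Proof.
move=> x0 e0 Px Pxe; suff Pt : forall t, P (x + t * e) /\ P (x + t.+1 * e) by move=> t; case: (Pt t).
elim=> [|t [Pt PtS]]; first by rewrite mul0n addn0 mul1n.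
split => //; have := @P_closed (x + t * e) e _ e0 Pt.
rewrite -!addnA -!mulSnr -mulnDl addn2; by apply; rewrite ?addn_gt0 ?x0.
Qed.

(* A Euclidean descent on the pair (f, h). *)
Lemma progression_closed_shift u f h : 0 < u -> 0 < f -> 0 < h ->
  (forall t, P (u + t * f)) -> P (u + h) -> forall t, P (u + h + t * f).
Proof.
have [n] := ubnP (f + h); elim: n => // n IHn in u f h *.
rewrite ltnS => fhn u0 f0 h0 Pu Puh.
have Peq m m' : m = m' -> P m -> P m' by move->.
suff Puhf : P (u + h + f) by apply: progression_closed_all => //; lia.
have [hf|fh|hf] := ltngtP h f.
- have Puh_t t : P (u + h + t * h).
    rewrite -addnA -mulSn; apply: progression_closed_all => //; apply: Peq (Pu 0); lia.
  have := IHn (u + h) h (f - h) ltac:(lia) ltac:(lia) h0 ltac:(lia) Puh_t.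
  move/(_ (Peq (u + 1 * f) (u + h + (f - h)) ltac:(lia) (Pu 1)) 1); apply: Peq; lia.
- have Puf_t t : P (u + f + t * f) by rewrite -addnA -mulSn.
  have := IHn (u + f) f (h - f) ltac:(lia) ltac:(lia) f0 ltac:(lia) Puf_t.
  move/(_ (Peq (u + h) (u + f + (h - f)) ltac:(lia) Puh) 1); apply: Peq; lia.
- by apply: Peq (Pu 2); lia.
Qed.

End ProgressionClosed.

Lemma class_representatives (c : nat -> nat) n : exists L : seq nat,
  [/\ size L <= n, all (fun j => 0 < j) L &
      forall j, 0 < j -> c j < n ->
        exists2 b, b \in L & [/\ 0 < b, b <= j & c b = c j]].
Proof.
elim: n => [|n [L [sizeL L_gt0 L_rep]]]; first by exists [::].
have [ex_n|no_n] := classic (exists j, (0 < j) && (c j == n)).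
- have [m /andP[m_gt0 /eqP cm] m_min] := ex_minnP ex_n.
  exists (m :: L); split => /=; [by rewrite ltnS | by rewrite m_gt0 |].
  move=> j j_gt0; rewrite ltnS leq_eqVlt => /orP[/eqP cjn|cjn].
    by exists m; rewrite ?mem_head ?m_min ?j_gt0 ?cjn ?eqxx // cm cjn.
  by have [b bL ?] := L_rep j j_gt0 cjn; exists b; rewrite // inE bL orbT.
- exists L; split => //; first exact: leqW.
  move=> j j_gt0; rewrite ltnS leq_eqVlt => /orP[/eqP cjn|]; last exact: L_rep.
  by case: no_n; exists j; rewrite j_gt0 cjn eqxx.
Qed.

Section IncreasingIndices.
Variable I : nat -> nat.
Hypothesis I1_gt0 : 0 < I 1.
Hypothesis I_incr : forall j, 0 < j -> I j < I j.+1.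

Lemma incr_leq i j : 0 < i -> i <= j -> I i <= I j.
Proof.
move=> i_gt0 ij; apply: (homo_leq_in (D := [pred n | 0 < n]) (f := I) (r := leq)) => //=.
- exact: leq_trans.
- by move=> m l; rewrite !inE => m_gt0 _ n /andP[/(ltn_trans m_gt0)].
- by move=> m m_gt0 _; apply/ltnW/I_incr.
- by rewrite inE (leq_trans i_gt0 ij).
Qed.

Lemma progression_closed_from (P : nat -> Prop) b : progression_closed P ->
  0 < b -> P (I 1) -> P (I 2) -> P (I b) -> forall t, P (I b + t * (I 2 - I 1)).
Proof.
move=> P_closed b_gt0 P1 P2 Pb; have I12 := @I_incr 1 isT.
have P1_t : forall t, P (I 1 + t * (I 2 - I 1)).
  by apply: progression_closed_all => //; rewrite ?subn_gt0 // subnKC // ltnW.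
case: (ltngtP b 1) => [|b_gt1|-> //]; first by rewrite ltnNge b_gt0.
have I1b : I 1 < I b by apply: leq_trans (incr_leq _ b_gt1).
have := progression_closed_shift P_closed (h := I b - I 1) I1_gt0 _ _ P1_t.
rewrite subnKC; last exact: ltnW.
by apply=> //; rewrite subn_gt0.
Qed.

Lemma progression_basis : exists J : seq nat,
  [/\ uniq J, all (fun j => 0 < j) J, size J <= I 2 - I 1 + 1, (1 \in J) && (2 \in J) &
      forall P, progression_closed P -> (forall j, j \in J -> P (I j)) ->
        forall j, 0 < j -> P (I j)].
Proof.
set d := I 2 - I 1; have d_gt0 : 0 < d by rewrite subn_gt0 I_incr.
have [L [sizeL L_gt0 L_rep]] := class_representatives (fun j => I j %% d) d.
have L1 : 1 \in L.
  have [b bL [b_gt0 b_le1 _]] := L_rep 1 isT (ltn_pmod _ d_gt0).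
  by have /eqP <- : b == 1 by rewrite eqn_leq b_le1.
have inJ j : j \in undup (2 :: L) = (j == 2) || (j \in L) by rewrite mem_undup inE.
exists (undup (2 :: L)); split.
- exact: undup_uniq.
- by apply/allP => j; rewrite inJ => /orP[/eqP -> //|/(allP L_gt0)].
- by apply: leq_trans (size_undup _) _; rewrite addn1 ltnS.
- by rewrite !inJ L1 eqxx orbT.
move=> P P_closed PJ j j_gt0.
have [b bL [b_gt0 b_le_j Ib]] := L_rep j j_gt0 (ltn_pmod _ d_gt0).
have Ib_le : I b <= I j := incr_leq b_gt0 b_le_j.
have d_dvd : d %| I j - I b by rewrite -eqn_mod_dvd // Ib.
have := progression_closed_from P_closed b_gt0 _ _ _ ((I j - I b) %/ d).
by rewrite divnK // subnKC //; apply; apply: PJ; rewrite inJ ?bL ?L1 ?eqxx ?orbT.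
Qed.

End IncreasingIndices.

Theorem proposition2p1 (k : fieldType) (p : nat)
  (V : nat -> ncp k -> Prop) (I : nat -> nat) :
  prime p -> (p \in [pchar k])%R ->
  (forall i, 0 < i -> is_Tspace (V i)) ->
  (forall i j, 0 < i -> 0 < j -> seteq (Tgen (prodset (V i) (V j))) (V (i + j))) ->
  (forall m, 0 < m -> forall f, V (2 * m + 1) f -> addsp (V (m + 1)) (V 1) f) ->
  0 < I 1 -> (forall j, 0 < j -> I j < I j.+1) ->
  exists J : seq nat,
    [/\ uniq J, all (fun j => 0 < j) J, size J <= I 2 - I 1 + 1,
        (1 \in J) && (2 \in J) &
        seteq (sumsp (fun j => V (I j)) (fun j => 0 < j))
              (sumsp (fun j => V (I j)) (fun j => j \in J))].
Proof.
move=> _ _ V_Tspace V_mul V_odd I1_gt0 I_incr.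
have I_gt0 j : 0 < j -> 0 < I j.
  by move=> j_gt0; apply: leq_trans I1_gt0 (incr_leq I_incr _ j_gt0).
have [J [? J_gt0 ? ? J_cover]] := progression_basis I1_gt0 I_incr.
exists J; split=> // f; split; last by apply: sumsp_sub => j /(allP J_gt0).
set W := sumsp (fun j => V (I j)) (fun j => j \in J).
have W_add : forall a b, W a -> W b -> W (ncadd a b).
  apply: sumsp_add => j /(allP J_gt0)/I_gt0/V_Tspace [[_ _ VD _] _]; exact: VD.
pose P n := forall f, V n f -> W f.
have P_closed : progression_closed P.
  move=> x e x_gt0 e_gt0 Px Pxe g /(V_split V_Tspace V_mul V_odd x_gt0 e_gt0).
  by move=> [a [b [Va Vb ->]]]; apply: W_add; [exact: Pxe | exact: Px].
apply: (sumsp_min (W := W)) => [|//|j h j_gt0 Vh]; first exact: sumsp0.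
by apply: (J_cover P P_closed _ _ j_gt0 _ Vh) => j' j'J g; apply: sumsp1.
Qed.
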